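(* Let $p>1$ be an integer and let $u^{(p)}$ be the fixed point of the substitution $\varphi_p(L)=L^pS$, $\varphi_p(S)=M$, $\varphi_p(M)=L^{p-1}S$. If $Sz'S$ is a factor of $u^{(p)}$ with $|z'|_S=0$, then $z'=L^p$, or $z'=ML^p$, or $z'=ML^{p-1}$.
   Context: $u^{(p)}=\lim_{n\to\infty}\varphi_p^n(L)$. A factor is a finite contiguous subword; $|w|_a$ is the number of occurrences of the letter $a$ in $w$; $L^k$ denotes $k$ concatenated copies of $L$. *)

From HB Require Import structures.
From mathcomp Require Import all_boot.
Set Implicit Arguments. Unset Strict Implicit. Unset Printing Implicit Defensive.

Inductive letter := L | S | M.

Definition letter_eqb (a b : letter) : bool :=
  match a, b with
  | L, L | S, S | M, M => true
  | _, _ => false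
  end.

Lemma letter_eqP : Equality.axiom letter_eqb.
Proof. by case; case; constructor. Qed.

HB.instance Definition _ := hasDecEq.Build letter letter_eqP.

Definition Lpow (k : nat) : seq letter := nseq k L.

Definition phi (p : nat) (a : letter) : seq letter :=
  match a with
  | L => Lpow p ++ [:: S]
  | S => [:: M]
  | M => Lpow p.-1 ++ [:: S]
  end.

Definition phiw (p : nat) (w : seq letter) : seq letter := flatten (map (phi p) w).

Definition phin (p n : nat) : seq letter := iter n (phiw p) [:: L].

(* u is the limit of phi_p^n(L) in the product topology: every position i
   is eventually defined in phi_p^n(L) and eventually constant equal to u i. *)
Definition is_limit_fixed_point (p : nat) (u : nat -> letter) : Prop :=
  forall i, exists N, forall n, N <= n ->
    i < size (phin p n) /\ nth L (phin p n) i = u i.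

Definition factor_of (w : seq letter) (u : nat -> letter) : Prop :=
  exists i, forall j, j < size w -> u (i + j) = nth L w j.

(* Every factor of the fixed point occurs in some phi_p^n(L) with n >= 1, and
   such a word is L^p S followed by a concatenation of the blocks L^p S,
   M L^p S, M L^(p-1) S, possibly followed by a single M; so between two
   consecutive letters S lies L^p, M L^p or M L^(p-1).  This shape is stable
   under phi_p because, for each block z S, the word M phi_p(z S) re-parses
   as a concatenation of blocks followed by M. *)

From mathcomp Require Import all_boot.

Set Implicit Arguments.
Unset Strict Implicit.
Unset Printing Implicit Defensive.

Inductive block := BL | BML | BMLs.

Definition block_body (p : nat) (b : block) : seq letter :=
  match b with
  | BL => Lpow p
  | BML => M :: Lpow p
  | BMLs => M :: Lpow p.-1
  end.

Definition block_word p b := block_body p b ++ [:: S].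

Definition blocks p (bs : seq block) := flatten (map (block_word p) bs).

Lemma blocks_cons p b bs : blocks p (b :: bs) = block_word p b ++ blocks p bs.
Proof. by []. Qed.

Lemma blocks1 p b : blocks p [:: b] = block_word p b.
Proof. exact: cats0. Qed.

Lemma blocks_cat p bs cs : blocks p (bs ++ cs) = blocks p bs ++ blocks p cs.
Proof. by rewrite /blocks map_cat flatten_cat. Qed.

Lemma S_notin_Lpow k : S \notin Lpow k.
Proof. by rewrite mem_nseq andbF. Qed.

Lemma S_notin_block_body p b : S \notin block_body p b.
Proof. by case: b; rewrite /= ?in_cons S_notin_Lpow. Qed.

Lemma eq_cat_cons_notin (T : eqType) (a : T) (c x r q : seq T) :
  a \notin c -> c ++ a :: r = x ++ a :: q ->
  (x = c /\ r = q) \/ exists x', x = c ++ a :: x' /\ r = x' ++ a :: q.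
Proof.
elim: c x => [|d c IHc] [|e x] /=.
- by move=> _ [->]; left.
- by move=> _ [<- ->]; right; exists x.
- by rewrite in_cons => /norP[/eqP da _] [ed]; rewrite ed in da.
- rewrite in_cons => /norP[_ ac] [-> e_cx].
  have [[-> ->]|[x' [-> ->]]] := IHc x ac e_cx; first by left.
  by right; exists x'.
Qed.

Lemma blocks_prefix_S p bs t z y :
  S \notin t -> S \notin z -> blocks p bs ++ t = z ++ S :: y ->
  exists b, z = block_body p b.
Proof.
case: bs => [|b bs] St Sz.
  by move=> /= e; move: St; rewrite e mem_cat mem_head orbT.
rewrite blocks_cons /block_word -!catA.
case/(eq_cat_cons_notin (S_notin_block_body p b)) => [[-> _]|[x' [ez _]]].
  by exists b.
by move: Sz; rewrite ez mem_cat mem_head orbT.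
Qed.

Lemma blocks_factor_S p bs t x z y :
  S \notin t -> S \notin z -> blocks p bs ++ t = x ++ S :: z ++ S :: y ->
  exists b, z = block_body p b.
Proof.
move=> St Sz; elim: bs x => [|b bs IHbs] x.
  by move=> /= e; move: St; rewrite e mem_cat mem_head orbT.
rewrite blocks_cons /block_word -!catA.
case/(eq_cat_cons_notin (S_notin_block_body p b)) => [[_ e]|[x' [_ e]]].
  exact: blocks_prefix_S St Sz e.
exact: IHbs e.
Qed.

Lemma phiw_cat p v w : phiw p (v ++ w) = phiw p v ++ phiw p w.
Proof. by rewrite /phiw map_cat flatten_cat. Qed.

Lemma phiw_nil p : phiw p [::] = [::].
Proof. by []. Qed.

Lemma phiw_cons p a w : phiw p (a :: w) = phi p a ++ phiw p w.
Proof. by []. Qed.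

Lemma phiw_Lpow p k : phiw p (Lpow k) = blocks p (nseq k BL).
Proof. by elim: k => // k IHk; rewrite phiw_cons IHk. Qed.

Definition block_image (p : nat) (b : block) : seq block :=
  match b with
  | BL => BML :: nseq p.-1 BL
  | BML => BMLs :: nseq p BL
  | BMLs => BMLs :: nseq p.-1 BL
  end.

Lemma M_phiw_block_word p b : 0 < p ->
  M :: phiw p (block_word p b) = blocks p (block_image p b) ++ [:: M].
Proof.
case: p => // p _.
by case: b; rewrite /block_word phiw_cat !phiw_cons phiw_nil phiw_Lpow -!catA.
Qed.

Lemma M_phiw_blocks p bs : 0 < p ->
  M :: phiw p (blocks p bs) =
  blocks p (flatten (map (block_image p) bs)) ++ [:: M].
Proof.
move=> p_gt0; elim: bs => //= b bs IHbs.
rewrite phiw_cat -cat_cons M_phiw_block_word // -catA /= IHbs.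
by rewrite blocks_cat catA.
Qed.

Definition blocked p (w : seq letter) :=
  exists bs t, w = blocks p (BL :: bs) ++ t /\ (t = [::] \/ t = [:: M]).

Lemma blocked_phiw p w : 0 < p -> blocked p w -> blocked p (phiw p w).
Proof.
case: p => // p _ [bs [t [-> t_tail]]].
have head_image v : phiw p.+1 (block_word p.+1 BL) ++ v =
    blocks p.+1 (BL :: nseq p BL) ++ M :: v.
  by rewrite phiw_cat phiw_Lpow -catA.
rewrite blocks_cons phiw_cat (phiw_cat _ (block_word _ _)) -catA head_image.
rewrite -cat_cons M_phiw_blocks //.
set F := flatten (map (block_image p.+1) bs).
case: t_tail => ->; rewrite ?phiw_cons phiw_nil -catA.
  exists (nseq p BL ++ F), [:: M]; split; last by right.
  by rewrite -cat_cons blocks_cat cats0 catA.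
exists (nseq p BL ++ F ++ [:: BMLs]), [::]; split; last by left.
by rewrite -cat_cons !blocks_cat blocks1 !cats0.
Qed.

Lemma blocked_phin p n : 0 < p -> blocked p (phin p n.+1).
Proof.
move=> p_gt0; elim: n => [|n IHn]; last exact: blocked_phiw.
exists [::], [::]; split; last by left.
by rewrite cats0 blocks1 [phin _ _]/= phiw_cons phiw_nil cats0.
Qed.

Lemma eventually_forall_lt (P : nat -> nat -> Prop) :
  (forall j, exists N, forall n, N <= n -> P n j) ->
  forall k, exists N, forall n, N <= n -> forall j, j < k -> P n j.
Proof.
move=> evP; elim=> [|k [N HN]]; first by exists 0.
have [N' HN'] := evP k.
exists (maxn N N') => n; rewrite geq_max => /andP[leNn leN'n] j.
by rewrite ltnS leq_eqVlt => /predU1P[->|]; [exact: HN' | exact: HN].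
Qed.

Lemma factor_from_nth (T : Type) (x0 : T) (v w : seq T) i :
  i + size w <= size v ->
  (forall j, j < size w -> nth x0 v (i + j) = nth x0 w j) ->
  exists x y, v = x ++ w ++ y.
Proof.
move=> le_iw_v vw; exists (take i v), (drop (size w) (drop i v)).
have w_in_drop : size w <= size (drop i v).
  by rewrite size_drop leq_subRL // (leq_trans (leq_addr _ _) le_iw_v).
have w_window : take (size w) (drop i v) = w.
  apply: (eq_from_nth (x0 := x0)) => [|j]; rewrite size_takel // => lt_jw.
  by rewrite nth_take // nth_drop vw.
by rewrite -{1}w_window !cat_take_drop.
Qed.

Lemma factor_of_limit p u w N :
  is_limit_fixed_point p u -> factor_of w u ->
  exists n x y, N <= n /\ phin p n = x ++ w ++ y.
Proof.
move=> lim_u [i uw].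
have [N' HN'] := @eventually_forall_lt
  (fun n j => i + j < size (phin p n) /\ nth L (phin p n) (i + j) = u (i + j))
  (fun j => lim_u (i + j)) (size w).
have {HN'} phin_uw := HN' (maxn N N') (leq_maxr N N').
suff [x [y e]] : exists x y, phin p (maxn N N') = x ++ w ++ y.
  by exists (maxn N N'), x, y; rewrite leq_maxl.
case: w uw phin_uw => [|a w] uw phin_uw.
  by exists (phin p (maxn N N')), [::]; rewrite !cats0.
apply: (factor_from_nth (x0 := L) (i := i)) => [|j lt_j].
  by have [] := phin_uw _ (ltnSn (size w)); rewrite /= addnS.
by rewrite (phin_uw j lt_j).2 uw.
Qed.

Theorem mainTheorem4 (p : nat) (u : nat -> letter) (z' : seq letter) :
  1 < p ->
  is_limit_fixed_point p u ->
  factor_of ([:: S] ++ z' ++ [:: S]) u ->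
  count_mem S z' = 0 ->
  z' = Lpow p \/ z' = M :: Lpow p \/ z' = M :: Lpow p.-1.
Proof.
move=> p_gt1 lim_u SzS /count_memPn Sz.
have [[|n] [x [y [// _ e]]]] := factor_of_limit 1 lim_u SzS.
have [bs [t [ew t_tail]]] := blocked_phin n (ltnW p_gt1).
have St : S \notin t by case: t_tail => ->.
have e' : blocks p (BL :: bs) ++ t = x ++ S :: z' ++ S :: y.
  by rewrite -ew e -!catA.
by have [[] ->] := blocks_factor_S St Sz e'; auto.
Qed.
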